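(* With the setting in the context, for all $x\in K_n$, $y\in K_m$, $r,r''\in\widehat G_{n+1}$, $r'\in\widehat G_{m+1}$, $g\in G_{n-1}$, $g',g''\in G_{m-1}$: (i) $A_x^rA_y^{r'}=A_y^{r'}A_x^r$, $B_x^gB_y^{g'}=B_y^{g'}B_x^g$, and $A_x^rB_y^{g'}=B_y^{g'}A_x^r$; (ii) $A_x^rA_x^{r''}=\delta(r,r'')A_x^r$ and $B_y^{g'}B_y^{g''}=\delta(g',g'')B_y^{g'}$, where $\delta(\cdot,\cdot)$ is the Kronecker delta; (iii) $\sum_{r\in\widehat G_{n+1}}A_x^r=\mathbb 1$ and $\sum_{g\in G_{n-1}}B_x^g=\mathbb 1$.
   Context: $(C_\bullet,\partial^C_\bullet)$ is a chain complex with each $C_n$ free abelian on a finite set $K_n$, $K_n\ne\emptyset$ for finitely many $n$; $(G_\bullet,\partial^G_\bullet)$ is a chain complex of finite abelian groups, $\widehat{G}_k=\mathrm{Hom}(G_k,U(1))$. $\mathrm{hom}(C,G)^p=\prod_n\mathrm{Hom}(C_n,G_{n-p})$ with $(\delta^pf)_n=f_{n-1}\partial^C_n-(-1)^p\partial^G_{n-p}f_n$. $\mathrm{hom}(C,G)_p=\mathrm{Hom}(\mathrm{hom}(C,G)^p,U(1))$ (written additively), $\chi_m(f)=m(f)$, $\delta_1m=m\circ\delta^0$. $\mathcal H=\bigotimes_n\bigotimes_{x\in K_n}\mathbb C[G_n]$ with orthonormal basis $|f\rangle$, $f\in\mathrm{hom}(C,G)^0$; $P_t|f\rangle=|f+t\rangle$,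 $Q_m|f\rangle=\chi_m(f)|f\rangle$; $A_t=P_{\delta^{-1}t}$ ($t\in\mathrm{hom}(C,G)^{-1}$), $B_m=Q_{\delta_1m}$ ($m\in\mathrm{hom}(C,G)_1$). For $x\in K_n$, $g\in G_{n-p}$, $gx^*\in\mathrm{hom}(C,G)^p$ has $n$-th component sending $x\mapsto g$ and other elements of $K_n$ to $0$, other components $0$; for $r\in\widehat G_{n-p}$, $rx_*\in\mathrm{hom}(C,G)_p$ is $rx_*(f)=r(f_n(x))$. For $x\in K_n$: $A_x^r=\frac1{|G_{n+1}|}\sum_{h\in G_{n+1}}r(h)A_{hx^*}$ ($r\in\widehat G_{n+1}$), and $B_x^g=\frac1{|G_{n-1}|}\sum_{\rho\in\widehat G_{n-1}}\rho(g)B_{\rho x_*}$ ($g\in G_{n-1}$). *)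

From HB Require Import structures.
From mathcomp Require Import all_boot all_order all_algebra all_fingroup.
From mathcomp Require Import all_solvable all_field all_character.
Set Implicit Arguments. Unset Strict Implicit. Unset Printing Implicit Defensive.
Import GRing.Theory Num.Theory.
Local Open Scope ring_scope.

Definition tr (P : int -> Type) (m n : int) (e : m = n) (a : P m) : P n :=
  eq_rect m P a n e.

Arguments tr P {m n} e a.
Lemma sub1K (n : int) : n - 1 + 1 = n. Proof. by rewrite subrK. Qed.
Lemma add1K (n : int) : n + 1 - 1 = n. Proof. by rewrite addrK. Qed.

Section Setting.
(* C_n = free abelian group on the finite set K n;
   dC n x y = coefficient of y in the boundary d^C_n x  (x : K n, y : K (n-1)). *)
Variable K : int -> finType.
Variable G : int -> finZmodType.
Variable dC : forall n : int, K n -> K (n - 1) -> int.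
Variable dG : forall n : int, {additive G n -> G (n - 1)}.

(* hom(C,G)^p, p = 0, -1, 1  (Hom(C_n, G_k) = maps K_n -> G_k) *)
Definition hom0 := forall n : int, K n -> G n.
Definition homm1 := forall n : int, K n -> G (n + 1).
Definition hom1 := forall n : int, K n -> G (n - 1).

Definition delta_m1 (t : homm1) : hom0 := fun n x =>
  \sum_(y : K (n - 1)) tr (fun k => G k : Type) (sub1K n) (t (n - 1) y) *~ @dC n x y
  + tr (fun k => G k : Type) (add1K n) (@dG (n + 1) (t n x)).

Definition delta0 (f : hom0) : hom1 := fun n x =>
  \sum_(y : K (n - 1)) f (n - 1) y *~ @dC n x y - @dG n (f n x).

(* Hilbert space = functions on the basis hom(C,G)^0; operators on it *)
Definition state := hom0 -> algC.
Definition op := state -> state.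

(* P_t |f> = |f + t> *)
Definition Pop (t : hom0) : op := fun psi f => psi (fun n x => f n x - t n x).
Definition Qop (m : hom0 -> algC) : op := fun psi f => m f * psi f.

Definition Aop_t (t : homm1) : op := Pop (delta_m1 t).
Definition Bop_m (m : hom1 -> algC) : op := Qop (fun f => m (delta0 f)).

Definition costar (n : int) (x : K n) (h : G (n + 1)) : homm1 := fun k y =>
  match n =P k with
  | ReflectT e => if tr (fun k => K k : Type) e x == y then tr (fun j => G (j + 1) : Type) e h else 0
  | ReflectF _ => 0
  end.

Definition chistar (n : int) (x : K n) (rho : Iirr [set: G (n - 1)]) : hom1 -> algC :=
  fun f => 'chi_rho (f n x).

Definition Ax (n : int) (x : K n) (r : Iirr [set: G (n + 1)]) : op := fun psi f =>
  (#|G (n + 1)|%:R)^-1 * \sum_(h : G (n + 1)) 'chi_r h * Aop_t (costar x h) psi f.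

Definition Bx (n : int) (x : K n) (g : G (n - 1)) : op := fun psi f =>
  (#|G (n - 1)|%:R)^-1 *
    \sum_(rho : Iirr [set: G (n - 1)]) 'chi_rho g * Bop_m (chistar x rho) psi f.

Definition op0 : op := fun _ _ => 0.

End Setting.

From HB Require Import structures.
From mathcomp Require Import all_boot all_order all_algebra all_fingroup.
From mathcomp Require Import all_solvable all_field all_character.
From mathcomp Require Import ring.
From Stdlib Require Import FunctionalExtensionality.
Set Implicit Arguments. Unset Strict Implicit. Unset Printing Implicit Defensive.
Import GRing.Theory Num.Theory.
Local Open Scope ring_scope.

(* G_(n+1) acts on the basis hom^0 by the translations f |-> f - delta^-1 (h x^* ),
   and A_x^r is the projection of the induced representation onto its r-isotypic
   component; the orthogonality relations for the characters of a finite abelian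
   group then give (ii) and (iii) for the A's, and the A's commute because all these
   translations commute.  By Fourier inversion on G_(n-1), B_x^g is diagonal: it
   multiplies |f> by the indicator of (delta^0 f)_x = -g, which gives (ii) and (iii)
   for the B's.  Finally delta^0 delta^-1 = 0, so these indicators are invariant
   under the translations, and every A commutes with every B. *)

Section Characters.
Variable V : finZmodType.

Lemma card_zmod_neq0 : (#|V|%:R : algC) != 0.
Proof. by rewrite pnatr_eq0 -lt0n; apply/card_gt0P; exists 0. Qed.

Lemma zmod_abelian : abelian [set: V].
Proof. by apply/centsP => a _ b _; apply: addrC. Qed.

Lemma irr_zmod_lin_char (i : Iirr [set: V]) : 'chi_i \is a linear_char.
Proof. exact: char_abelianP zmod_abelian i. Qed.

Lemma irr_zmodD (i : Iirr [set: V]) (a b : V) : 'chi_i (a + b) = 'chi_i a * 'chi_i b.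
Proof. exact: (lin_charM (irr_zmod_lin_char i) (in_setT a) (in_setT b)). Qed.

Lemma irr_zmod0 (i : Iirr [set: V]) : 'chi_i 0 = 1.
Proof. exact: (lin_char1 (irr_zmod_lin_char i)). Qed.

Lemma irr_zmodN (i : Iirr [set: V]) (a : V) : 'chi_i (- a) = ('chi_i a)^*.
Proof. exact: (lin_charV_conj (irr_zmod_lin_char i) (in_setT a)). Qed.

Lemma sum_irr_zmodMN (i j : Iirr [set: V]) :
  \sum_a 'chi_i a * 'chi_j (- a) = #|V|%:R * (i == j)%:R.
Proof.
rewrite -cfdot_irr cfdotE cardsT mulrA mulfV ?card_zmod_neq0 // mul1r.
by apply: eq_big => [a | a _]; rewrite ?inE ?irr_zmodN.
Qed.

Lemma sum_irr_zmod (a : V) :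
  \sum_(i : Iirr [set: V]) 'chi_i a = #|V|%:R * (a == 0)%:R.
Proof.
have := second_orthogonality_relation a (in_setT (0 : V)).
under eq_bigr => i _ do rewrite irr_zmod0 conjC1 mulr1.
move=> ->; have -> : 'C_[set: V][a]%g = [set: V].
  by apply/setIidPl/subsetP => b _; apply/cent1P; apply: addrC.
by rewrite cardsT mulr_natr -[0 : V]/(1%g : V) class1G inE.
Qed.

Lemma mean_irr_zmodM (g a : V) :
  (#|V|%:R)^-1 * \sum_(i : Iirr [set: V]) 'chi_i g * 'chi_i a = (g + a == 0)%:R.
Proof.
under eq_bigr => i _ do rewrite -irr_zmodD.
by rewrite sum_irr_zmod mulKf ?card_zmod_neq0.
Qed.

End Characters.

Lemma natr_addr_eq0M (V : zmodType) (g g' a : V) :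
  (g + a == 0)%:R * (g' + a == 0)%:R = (g == g')%:R * (g + a == 0)%:R :> algC.
Proof.
rewrite !addr_eq0; have [-> | ne] := eqVneq g (- a); last by rewrite !mul0r mulr0.
by rewrite mul1r mulr1 eq_sym.
Qed.

Lemma sum_natr_addr_eq0 (V : finZmodType) (a : V) :
  \sum_(g : V) (g + a == 0)%:R = 1 :> algC.
Proof.
under eq_bigr do rewrite addr_eq0.
by rewrite (bigD1 (- a)) //= eqxx big1 ?addr0 // => g /negbTE ->.
Qed.

Definition char_proj {H : finZmodType} {X : Type} (act : H -> X -> X)
    (r : Iirr [set: H]) (psi : X -> algC) (f : X) : algC :=
  (#|H|%:R)^-1 * \sum_h 'chi_r h * psi (act h f).

Lemma char_proj2E (H1 H2 : finZmodType) (X : Type) (act1 : H1 -> X -> X)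
    (act2 : H2 -> X -> X) (r1 : Iirr [set: H1]) (r2 : Iirr [set: H2])
    (psi : X -> algC) (f : X) :
  char_proj act1 r1 (char_proj act2 r2 psi) f = (#|H1|%:R)^-1 * (#|H2|%:R)^-1 *
    \sum_h1 \sum_h2 'chi_r1 h1 * 'chi_r2 h2 * psi (act2 h2 (act1 h1 f)).
Proof.
rewrite /char_proj -mulrA; congr (_ * _).
rewrite [RHS]mulr_sumr; apply: eq_bigr => h1 _.
by rewrite mulrCA !mulr_sumr; apply: eq_bigr => h2 _; ring.
Qed.

Lemma char_projC (H1 H2 : finZmodType) (X : Type) (act1 : H1 -> X -> X)
    (act2 : H2 -> X -> X) (r1 : Iirr [set: H1]) (r2 : Iirr [set: H2])
    (psi : X -> algC) (f : X) :
  (forall h1 h2 f, act2 h2 (act1 h1 f) = act1 h1 (act2 h2 f)) ->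
  char_proj act1 r1 (char_proj act2 r2 psi) f =
  char_proj act2 r2 (char_proj act1 r1 psi) f.
Proof.
move=> act12; rewrite !char_proj2E exchange_big /= [_^-1 * _^-1]mulrC.
congr (_ * _); apply: eq_bigr => h2 _; apply: eq_bigr => h1 _.
by rewrite act12 (mulrC ('chi_r1 h1)).
Qed.

Section CharProjection.
Variables (H : finZmodType) (X : Type) (act : H -> X -> X).
Hypothesis act0 : forall f, act 0 f = f.
Hypothesis actD : forall a b f, act b (act a f) = act (a + b) f.

Lemma sum_char_proj (psi : X -> algC) (f : X) :
  \sum_r char_proj act r psi f = psi f.
Proof.
rewrite -mulr_sumr exchange_big /=.
under eq_bigr do rewrite -mulr_suml sum_irr_zmod.
rewrite (bigD1 0) //= big1 ?addr0 => [|h /negbTE ->]; last by rewrite mulr0 mul0r.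
by rewrite eqxx mulr1 mulrA mulVf ?card_zmod_neq0 // mul1r act0.
Qed.

Lemma char_projM (r s : Iirr [set: H]) (psi : X -> algC) (f : X) :
  char_proj act r (char_proj act s psi) f = (r == s)%:R * char_proj act r psi f.
Proof.
rewrite char_proj2E.
have -> : \sum_h \sum_h' 'chi_r h * 'chi_s h' * psi (act h' (act h f)) =
    \sum_k (\sum_h 'chi_r h * 'chi_s (- h)) * ('chi_s k * psi (act k f)).
  under eq_bigr => h _.
    rewrite (reindex_inj (addrI (- h))) /=.
    under eq_bigr => k _ do rewrite actD addNKr irr_zmodD.
    over.
  rewrite exchange_big /=; apply: eq_bigr => k _; rewrite mulr_suml.
  by apply: eq_bigr => h _; ring.
under eq_bigr do rewrite sum_irr_zmodMN.
have [<- | ne] := eqVneq r s; last first.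
  by rewrite big1 ?mulr0 ?mul0r // => k _; rewrite mul0r.
rewrite mul1r /char_proj -mulrA; congr (_ * _).
rewrite mulr_sumr; apply: eq_bigr => k _.
by rewrite mulr1 !mulrA mulVf ?card_zmod_neq0 ?mul1r.
Qed.

End CharProjection.

Lemma char_proj_mul_invariant (H : finZmodType) (X : Type) (act : H -> X -> X)
    (w psi : X -> algC) (r : Iirr [set: H]) (f : X) :
  (forall h f, w (act h f) = w f) ->
  char_proj act r (fun f => w f * psi f) f = w f * char_proj act r psi f.
Proof.
move=> w_inv; rewrite /char_proj [RHS]mulrCA [in RHS]mulr_sumr; congr (_ * _).
by apply: eq_bigr => h _; rewrite w_inv mulrCA.
Qed.

Lemma trD (V : int -> zmodType) (m k : int) (e : m = k) (a b : V m) :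
  tr (fun j => V j : Type) e (a + b) =
  tr (fun j => V j : Type) e a + tr (fun j => V j : Type) e b.
Proof. by case: k / e. Qed.

Lemma tr0 (V : int -> zmodType) (m k : int) (e : m = k) :
  tr (fun j => V j : Type) e (0 : V m) = 0.
Proof. by case: k / e. Qed.

Section Cochains.
Variables (K : int -> finType) (G : int -> finZmodType).
Variable dC : forall n : int, K n -> K (n - 1) -> int.
Variable dG : forall n : int, {additive G n -> G (n - 1)}.
Hypothesis dC2 : forall (n : int) (x : K n) (z : K (n - 1 - 1)),
  \sum_(y : K (n - 1)) @dC n x y * @dC (n - 1) y z = 0.
Hypothesis dG2 : forall (n : int) (a : G n), dG (n - 1) (dG n a) = 0.

Lemma tr_dG (a b : int) (e : a = b) (e' : a - 1 = b - 1) (u : G a) :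
  tr (fun k => G k : Type) e' (dG a u) = dG b (tr (fun k => G k : Type) e u).
Proof. by case: b / e e' => e'; rewrite (eq_irrelevance e' erefl). Qed.

Lemma dG_tr_dG (c d : int) (e : c - 1 = d) (v : G c) :
  dG d (tr (fun k => G k : Type) e (dG c v)) = 0.
Proof. by case: d / e; apply: dG2. Qed.

Definition translate (f t : hom0 K G) : hom0 K G := fun n x => f n x - t n x.

Lemma hom0_ext (f f' : hom0 K G) : (forall n x, f n x = f' n x) -> f = f'.
Proof.
move=> eq_f; apply: functional_extensionality_dep => n.
exact: functional_extensionality.
Qed.

Lemma delta_m1D (t u v : homm1 K G) :
  (forall k z, t k z = u k z + v k z) ->
  forall n (x : K n), delta_m1 dC dG t x = delta_m1 dC dG u x + delta_m1 dC dG v x.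
Proof.
move=> tE n x; rewrite /delta_m1 tE raddfD trD.
under eq_bigr do rewrite tE trD mulrzDl.
by rewrite big_split /= addrACA.
Qed.

Lemma delta_m1_eq0 (t : homm1 K G) :
  (forall k z, t k z = 0) -> forall n (x : K n), delta_m1 dC dG t x = 0.
Proof.
move=> t0 n x; rewrite /delta_m1 t0 raddf0 tr0 addr0.
by apply: big1 => z _; rewrite t0 tr0 mul0rz.
Qed.

Lemma delta0_translate (f u : hom0 K G) n (x : K n) :
  delta0 dC dG (translate f u) x = delta0 dC dG f x - delta0 dC dG u x.
Proof.
rewrite /delta0 /translate raddfB.
under eq_bigr do rewrite mulrzBl.
by rewrite sumrB !opprD addrACA.
Qed.

(* The terms in t_(n-2) cancel by dC2, the term dG dG t_n vanishes by dG2, and the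
   two remaining mixed sums agree. *)
Lemma delta0_delta_m1 (t : homm1 K G) n (x : K n) :
  delta0 dC dG (delta_m1 dC dG t) x = 0.
Proof.
rewrite /delta0 /delta_m1.
under eq_bigr do rewrite mulrzDl mulrz_suml.
rewrite big_split /= raddfD dG_tr_dG addr0 raddf_sum exchange_big /=.
rewrite big1 ?add0r => [|z _]; last first.
  under eq_bigr do rewrite -mulrzA.
  by rewrite -mulrz_sumr; under eq_bigr do rewrite mulrC; rewrite dC2 mulr0z.
apply/eqP; rewrite subr_eq0; apply/eqP/eq_bigr => y _.
by rewrite raddfMz (tr_dG (sub1K n)).
Qed.

Lemma costarD n (x : K n) (h h' : G (n + 1)) k (z : K k) :
  costar x (h + h') z = costar x h z + costar x h' z.
Proof.
rewrite /costar; case: eqP => [e | _]; last by rewrite addr0.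
by case: ifP => _; [apply: trD | rewrite addr0].
Qed.

Lemma costar0 n (x : K n) k (z : K k) : costar x (0 : G (n + 1)) z = 0.
Proof.
rewrite /costar; case: eqP => [e | _] //.
by case: ifP => _ //; apply: tr0.
Qed.

Definition coboundary_shift n (x : K n) (h : G (n + 1)) (f : hom0 K G) : hom0 K G :=
  translate f (delta_m1 dC dG (costar x h)).

Lemma coboundary_shift0 n (x : K n) (f : hom0 K G) : coboundary_shift x 0 f = f.
Proof.
apply: hom0_ext => k z.
by rewrite /coboundary_shift /translate (delta_m1_eq0 (costar0 x)) subr0.
Qed.

Lemma coboundary_shiftD n (x : K n) (h h' : G (n + 1)) (f : hom0 K G) :
  coboundary_shift x h' (coboundary_shift x h f) = coboundary_shift x (h + h') f.
Proof.
apply: hom0_ext => k z.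
by rewrite /coboundary_shift /translate -addrA -opprD (delta_m1D (costarD x h h')).
Qed.

Lemma coboundary_shiftC n m (x : K n) (y : K m) (h : G (n + 1)) (h' : G (m + 1))
    (f : hom0 K G) :
  coboundary_shift y h' (coboundary_shift x h f) =
  coboundary_shift x h (coboundary_shift y h' f).
Proof. by apply: hom0_ext => k z; apply: addrAC. Qed.

Lemma delta0_coboundary_shift n m (x : K n) (y : K m) (h : G (n + 1))
    (f : hom0 K G) :
  delta0 dC dG (coboundary_shift x h f) y = delta0 dC dG f y.
Proof. by rewrite delta0_translate delta0_delta_m1 subr0. Qed.

Lemma AxE n (x : K n) (r : Iirr [set: G (n + 1)]) :
  Ax dC dG x r = char_proj (coboundary_shift x) r.
Proof. by []. Qed.

Lemma BxE n (x : K n) (g : G (n - 1)) (psi : state K G) :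
  Bx dC dG x g psi = fun f => (g + delta0 dC dG f x == 0)%:R * psi f.
Proof.
apply: functional_extensionality => f; rewrite /Bx /Bop_m /Qop /chistar.
by under eq_bigr do rewrite mulrA; rewrite -mulr_suml mulrA mean_irr_zmodM.
Qed.

End Cochains.

Theorem lemma5
  (K : int -> finType) (G : int -> finZmodType)
  (dC : forall n : int, K n -> K (n - 1) -> int)
  (dG : forall n : int, {additive G n -> G (n - 1)})
  (hC : forall (n : int) (x : K n) (z : K (n - 1 - 1)),
      \sum_(y : K (n - 1)) dC n x y * dC (n - 1) y z = 0)
  (hG : forall (n : int) (a : G n), dG (n - 1) (dG n a) = 0)
  (hfin : exists N : nat, forall n : int, (N < `|n|)%N -> #|K n| = 0%N)
  (n m : int) (x : K n) (y : K m)
  (r r'' : Iirr [set: G (n + 1)]) (r' : Iirr [set: G (m + 1)])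
  (g : G (n - 1)) (g' g'' : G (m - 1)) :
  [/\ (* (i) *)
      Ax dC dG x r \o Ax dC dG y r' = Ax dC dG y r' \o Ax dC dG x r,
      Bx dC dG x g \o Bx dC dG y g' = Bx dC dG y g' \o Bx dC dG x g &
      Ax dC dG x r \o Bx dC dG y g' = Bx dC dG y g' \o Ax dC dG x r] /\
  [/\ (* (ii) *)
      Ax dC dG x r \o Ax dC dG x r'' =
        (if r == r'' then Ax dC dG x r else op0 (K := K) (G := G)) &
      Bx dC dG y g' \o Bx dC dG y g'' =
        (if g' == g'' then Bx dC dG y g' else op0 (K := K) (G := G))] /\
  [/\ (* (iii) *)
      (fun psi f => \sum_(s : Iirr [set: G (n + 1)]) Ax dC dG x s psi f) = id &
      (fun psi f => \sum_(k : G (n - 1)) Bx dC dG x k psi f) = id].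
Proof.
have op_ext (T U : op K G) : (forall psi f, T psi f = U psi f) -> T = U.
  move=> TU; apply: functional_extensionality => psi.
  by apply: functional_extensionality => f; apply: TU.
split; [|split]; [split|split|split]; apply: op_ext => psi f /=.
- by rewrite !AxE; apply: char_projC => h h' f'; apply: coboundary_shiftC.
- by rewrite !BxE mulrCA.
- rewrite AxE !BxE char_proj_mul_invariant // => h f'.
  by rewrite (delta0_coboundary_shift hC hG).
- rewrite AxE char_projM => [|h h' f']; last exact: coboundary_shiftD.
  by case: eqVneq => _; [apply: mul1r | apply: mul0r].
- rewrite !BxE mulrA natr_addr_eq0M -mulrA.
  by case: eqVneq => _; rewrite ?BxE; [apply: mul1r | apply: mul0r].
- exact: sum_char_proj (coboundary_shift0 dC dG x) psi f.
- by under eq_bigr do rewrite BxE; rewrite -mulr_suml sum_natr_addr_eq0 mul1r.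
Qed.
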